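(* Let $\alpha,\beta$ be real constants with $\alpha+2\beta=1$ and $\beta\le 2/3$, and let $A,B>0$. There exist constants $C_1>0$ and $c>0$ (depending only on $\alpha,\beta,A,B$) such that the following holds. Let $m,n$ be positive integers with $m\le n^2/C_1$ and $n\le m^2/C_1$, and let $P$ be a finite set of points and $L$ a finite set of lines in $\mathbb{R}^2$ with $|L|\le A\,m^{\alpha}n^{\beta}$ and $|I(P,L)|\ge B\,m^{\alpha-\frac13}n^{\beta+\frac23}$. Then $|P|\ge c\,m^{\frac12\alpha-\frac12}n^{\frac12\beta+1}$.
   Context: $I(P,L)$ denotes the set of incidences between $P$ and $L$, i.e. pairs $(p,\ell)\in P\times L$ with $p\in\ell$. *)

From Stdlib Require Import Reals List.
Import ListNotations.
Open Scope R_scope.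

Definition point := (R * R)%type.

(* Lines in R^2, each represented uniquely:
   NonVert a b is the line y = a x + b; Vert c is the line x = c. *)
Inductive line : Type :=
| NonVert (a b : R)
| Vert (c : R).

Definition on_line (p : point) (l : line) : Prop :=
  match l with
  | NonVert a b => snd p = a * fst p + b
  | Vert c => fst p = c
  end.

Definition on_lineb (p : point) (l : line) : bool :=
  match l with
  | NonVert a b => if Req_EM_T (snd p) (a * fst p + b) then true else false
  | Vert c => if Req_EM_T (fst p) c then true else false
  end.

Lemma on_lineP p l : on_lineb p l = true <-> on_line p l.
Proof.
  destruct l; simpl; destruct Req_EM_T; split; congruence.
Qed.

(* |I(P,L)|: number of pairs (p,l) in P x L with p on l
   (P, L given as duplicate-free lists, i.e. finite sets). *)
Definition incidences (P : list point) (L : list line) : nat :=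
  length (filter (fun pl => on_lineb (fst pl) (snd pl)) (list_prod P L)).

(* The proof is Szekely's crossing-number argument for the Szemeredi-Trotter theorem.
   Joining consecutive points of P along each non-vertical line of L gives a straight-line drawing
   on the vertex set P with at least I - |P| - |L| edges and at most |L|^2 crossing pairs.
   A crossing-free straight-line drawing has at most 4|V| edges: an edge s that does not have the
   least slope among the edges ending at its right end forms a wedge with the edge of next smaller
   slope there, and charging s to the rightmost vertex of that wedge, together with the position of
   that vertex (on either edge or strictly inside), is injective. Removing crossing edges one at a
   time gives |E| <= 4|V| + cr, and averaging this over the colour classes of all k-colourings of V
   gives |E| k^2 <= 4|V| k^3 + cr. Hence I <= |P| + |L| + 4|P|k + |L|^2/k^2 for every integer k >= 1.
   With J = m^(alpha-1/3) n^(beta+2/3), Lam = m^alpha n^beta and M = m^(alpha/2-1/2) n^(beta/2+1)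
   one has Lam^2 M^2 = J^3, M <= J and Lam << J under the hypotheses on m and n; taking k close to
   J/M then shows that |P| < c M would force I < B J. *)

From Stdlib Require Import Reals List Lia Lra ZArith ClassicalEpsilon Classical.
Import ListNotations.
Open Scope R_scope.

Definition asbool (P : Prop) : bool :=
  if excluded_middle_informative P then true else false.

Lemma asboolP (P : Prop) : asbool P = true <-> P.
Proof. unfold asbool; destruct excluded_middle_informative; split; congruence. Qed.

Lemma asboolF (P : Prop) : asbool P = false <-> ~ P.
Proof. unfold asbool; destruct excluded_middle_informative; split; congruence. Qed.

Lemma asboolT (P : Prop) : P -> asbool P = true.
Proof. apply asboolP. Qed.

Lemma asboolW (P : Prop) : asbool P = true -> P.
Proof. apply asboolP. Qed.

Lemma asbool_iff (P Q : Prop) : (P <-> Q) -> asbool P = asbool Q.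
Proof.
  intros HPQ; destruct (asbool Q) eqn:E.
  - apply asboolT, HPQ, asboolW, E.
  - apply asboolF; apply asboolF in E; tauto.
Qed.

Lemma asbool_andb (P Q : Prop) : (asbool P && asbool Q)%bool = asbool (P /\ Q).
Proof.
  destruct (asbool P) eqn:EP, (asbool Q) eqn:EQ; simpl; symmetry.
  - apply asboolT; split; apply asboolW; auto.
  - apply asboolF; intros [_ HQ]; apply asboolF in EQ; auto.
  - apply asboolF; intros [HP _]; apply asboolF in EP; auto.
  - apply asboolF; intros [HP _]; apply asboolF in EP; auto.
Qed.

Definition without {A : Type} (x : A) (l : list A) : list A :=
  filter (fun y => negb (asbool (y = x))) l.

Lemma In_without {A : Type} (x y : A) l : In y (without x l) <-> In y l /\ y <> x.
Proof.
  unfold without; rewrite filter_In. split; intros [Hy Hne]; split; auto.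
  - intros ->. rewrite asboolT in Hne; auto; discriminate.
  - rewrite (proj2 (asboolF _)); auto.
Qed.

Lemma length_filter_eq_NoDup {A : Type} (l : list A) x : NoDup l -> In x l ->
  length (filter (fun y => asbool (y = x)) l) = 1%nat.
Proof.
  intros N I. apply Nat.le_antisymm.
  - change 1%nat with (length [x]). apply NoDup_incl_length; [apply NoDup_filter; auto|].
    intros y Hy. apply filter_In in Hy. destruct Hy as [_ Hy]. apply asboolW in Hy. subst; simpl; auto.
  - assert (Hin : In x (filter (fun y => asbool (y = x)) l))
      by (apply filter_In; split; auto; apply asboolT; auto).
    destruct (filter (fun y => asbool (y = x)) l); [destruct Hin|simpl; lia].
Qed.

Lemma length_without {A : Type} (x : A) l : NoDup l -> In x l -> length l = S (length (without x l)).
Proof.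
  intros N I. unfold without.
  rewrite <- (filter_length (fun y => asbool (y = x)) l), length_filter_eq_NoDup; auto.
Qed.

Lemma NoDup_length_le_rel {A B : Type} (l1 : list A) (l2 : list B) (rel : A -> B -> Prop) :
  NoDup l1 ->
  (forall a, In a l1 -> exists b, In b l2 /\ rel a b) ->
  (forall a a' b, In a l1 -> In a' l1 -> rel a b -> rel a' b -> a = a') ->
  (length l1 <= length l2)%nat.
Proof.
  intros Hnd Hex Hinj.
  assert (Himg : exists l3, length l3 = length l1 /\ NoDup l3 /\ incl l3 l2 /\
             forall b, In b l3 -> exists a, In a l1 /\ rel a b).
  { clear - Hnd Hex Hinj. induction l1 as [|a l1 IH].
    - exists []. repeat split; try constructor; intros ? [].
    - inversion Hnd as [|? ? Ha Hnd']; subst.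
      destruct IH as [l3 (Hlen & Hnd3 & Hincl & Hpre)]; auto.
      { intros a0 Ha0; apply Hex; simpl; auto. }
      { intros a0 a1 b Ha0 Ha1; apply Hinj; simpl; auto. }
      destruct (Hex a (or_introl eq_refl)) as [b [Hb Rb]].
      exists (b :: l3). repeat split.
      + simpl; auto.
      + constructor; auto. intro Hin. destruct (Hpre b Hin) as [a' [Ha' Ra']].
        assert (a = a') by (apply (Hinj a a' b); simpl; auto). subst; contradiction.
      + intros x [<-|Hx]; auto.
      + intros b0 [<-|Hb0]; [exists a; simpl; auto|].
        destruct (Hpre b0 Hb0) as [a' [? ?]]; exists a'; simpl; auto. }
  destruct Himg as [l3 (<- & Hnd3 & Hincl & _)]. apply NoDup_incl_length; auto.
Qed.

Lemma NoDup_list_prod {A B : Type} (l1 : list A) (l2 : list B) :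
  NoDup l1 -> NoDup l2 -> NoDup (list_prod l1 l2).
Proof.
  induction 1 as [|a l1 Ha Hnd IH]; intros H2; simpl; [constructor|].
  apply NoDup_app; auto.
  - apply NoDup_map_NoDup_ForallPairs; auto. intros x y _ _ H; now inversion H.
  - intros [x y] Hin1 Hin2. apply in_map_iff in Hin1. destruct Hin1 as [z [Hz _]].
    inversion Hz; subst. apply in_prod_iff in Hin2. tauto.
Qed.

Lemma NoDup_four {A : Type} (a b c d : A) :
  a <> b -> a <> c -> a <> d -> b <> c -> b <> d -> c <> d -> NoDup [a; b; c; d].
Proof. intros. repeat constructor; simpl; intuition congruence. Qed.

Lemma list_argmax {A : Type} (key : A -> R) (l : list A) :
  l <> [] -> exists x, In x l /\ forall y, In y l -> key y <= key x.
Proof.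
  induction l as [|a [|b l] IH]; intros H; [congruence| |].
  - exists a; split; simpl; auto. intros y [<-|[]]; lra.
  - destruct IH as [x [Hx Hm]]; [discriminate|].
    destruct (Rle_dec (key a) (key x)).
    + exists x; split; [simpl; auto|]. intros y [<-|Hy]; auto.
    + exists a; split; [simpl; auto|]. intros y [<-|Hy]; [lra|]. specialize (Hm y Hy); lra.
Qed.

Lemma list_argmax_filter {A : Type} (key : A -> R) (Q : A -> Prop) (l : list A) :
  (exists x, In x l /\ Q x) ->
  exists x, In x l /\ Q x /\ forall y, In y l -> Q y -> key y <= key x.
Proof.
  intros [x0 [Hx0 Qx0]].
  destruct (list_argmax key (filter (fun x => asbool (Q x)) l)) as [x [Hx Hmax]].
  { intros E. assert (Hin : In x0 (filter (fun x => asbool (Q x)) l)).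
    { apply filter_In; split; auto; apply asboolT; auto. }
    rewrite E in Hin; destruct Hin. }
  apply filter_In in Hx; destruct Hx as [Hx Qx]; apply asboolW in Qx.
  exists x; split; [|split]; auto.
  intros y Hy Qy; apply Hmax, filter_In; split; auto; apply asboolT; auto.
Qed.

Lemma filter_filter {A : Type} (f g : A -> bool) l :
  filter f (filter g l) = filter (fun x => g x && f x)%bool l.
Proof.
  induction l as [|a l IH]; simpl; auto. destruct (g a); simpl; [destruct (f a)|]; rewrite IH; auto.
Qed.

Lemma list_prod_filter {A B : Type} (a : A -> bool) (b : B -> bool) l1 l2 :
  list_prod (filter a l1) (filter b l2) =
  filter (fun p => a (fst p) && b (snd p))%bool (list_prod l1 l2).
Proof.
  induction l1 as [|x l1 IH]; simpl; auto.
  rewrite filter_app, <- IH.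
  assert (Hrow : filter (fun p => a (fst p) && b (snd p))%bool (map (fun y => (x, y)) l2) =
                 if a x then map (fun y => (x, y)) (filter b l2) else []).
  { clear IH. induction l2 as [|y l2 IH2]; simpl; [destruct (a x); auto|].
    destruct (a x) eqn:Ea, (b y); simpl; rewrite IH2, ?Ea; auto. }
  rewrite Hrow. destruct (a x); auto.
Qed.

Section ListSums.
Local Open Scope nat_scope.

Lemma list_sum_map_add {A : Type} (f g : A -> nat) l :
  list_sum (map (fun x => f x + g x) l) = list_sum (map f l) + list_sum (map g l).
Proof. induction l; simpl; lia. Qed.

Lemma list_sum_map_le {A : Type} (f g : A -> nat) l : (forall x, In x l -> f x <= g x) ->
  list_sum (map f l) <= list_sum (map g l).
Proof.
  induction l as [|a l IH]; simpl; intros H; auto.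
  pose proof (H a (or_introl eq_refl)). pose proof (IH (fun x Hx => H x (or_intror Hx))). lia.
Qed.

Lemma list_sum_map_const {A : Type} k (l : list A) : list_sum (map (fun _ => k) l) = k * length l.
Proof. induction l; simpl; lia. Qed.

Lemma list_sum_map_mul_l {A : Type} k (f : A -> nat) l :
  list_sum (map (fun x => k * f x) l) = k * list_sum (map f l).
Proof. induction l; simpl; lia. Qed.

Lemma length_filter_as_sum {A : Type} (f : A -> bool) l :
  length (filter f l) = list_sum (map (fun x => if f x then 1 else 0) l).
Proof. induction l as [|a l IH]; simpl; auto. destruct (f a); simpl; lia. Qed.

Lemma length_filter_flat_map {A B : Type} (P : B -> bool) (F : A -> list B) l :
  length (filter P (flat_map F l)) = list_sum (map (fun x => length (filter P (F x))) l).
Proof. induction l; simpl; auto. rewrite filter_app, length_app, IHl; auto. Qed.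

Lemma length_filter_map {A B : Type} (P : B -> bool) (f : A -> B) l :
  length (filter P (map f l)) = length (filter (fun x => P (f x)) l).
Proof. induction l; simpl; auto. destruct (P (f a)); simpl; auto. Qed.

Lemma sum_length_filter_swap {A B : Type} (f : A -> B -> bool) la lb :
  list_sum (map (fun a => length (filter (f a) lb)) la) =
  list_sum (map (fun b => length (filter (fun a => f a b) la)) lb).
Proof.
  induction la as [|a la IH]; simpl.
  - rewrite list_sum_map_const; lia.
  - rewrite IH, length_filter_as_sum.
    rewrite (map_ext (fun b => length (if f a b then a :: filter (fun a0 => f a0 b) la
                                              else filter (fun a0 => f a0 b) la))
               (fun b => (if f a b then 1 else 0) + length (filter (fun a0 => f a0 b) la))).
    + rewrite list_sum_map_add; reflexivity.
    + intros b; destruct (f a b); simpl; lia.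
Qed.

End ListSums.

(** * Straight-line drawings *)

Record segment := Segment { slope : R; icept : R; xleft : R; xright : R }.

Definition height (s : segment) (x : R) : R := slope s * x + icept s.
Definition lend (s : segment) : point := (xleft s, height s (xleft s)).
Definition rend (s : segment) : point := (xright s, height s (xright s)).
Definition on_seg (s : segment) (z : point) : Prop :=
  xleft s <= fst z <= xright s /\ snd z = height s (fst z).
Definition in_seg (s : segment) (z : point) : Prop :=
  xleft s < fst z < xright s /\ snd z = height s (fst z).

Record drawing (V : list point) (E : list segment) : Prop := {
  drawing_NoDup_vertices : NoDup V;
  drawing_NoDup_edges : NoDup E;
  xleft_lt_xright : forall s, In s E -> xleft s < xright s;
  lend_vertex : forall s, In s E -> In (lend s) V;
  rend_vertex : forall s, In s E -> In (rend s) V;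
  vertex_not_in_seg : forall s v, In s E -> In v V -> ~ in_seg s v }.

Definition crossing (s t : segment) : Prop :=
  NoDup [lend s; rend s; lend t; rend t] /\ exists z, on_seg s z /\ on_seg t z.

Definition crossing_free (E : list segment) : Prop :=
  forall s t, In s E -> In t E -> ~ crossing s t.

Lemma lend_neq_rend V E s : drawing V E -> In s E -> lend s <> rend s.
Proof.
  intros D Hs H. pose proof (xleft_lt_xright _ _ D s Hs). unfold lend, rend in H.
  inversion H; lra.
Qed.

Lemma ends_incl V E s : drawing V E -> In s E -> incl [lend s; rend s] V.
Proof.
  intros D Hs x [<-|[<-|[]]]; [apply (lend_vertex _ _ D)|apply (rend_vertex _ _ D)]; auto.
Qed.

Lemma segment_eq (s t : segment) :
  slope s = slope t -> icept s = icept t -> xleft s = xleft t -> xright s = xright t -> s = t.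
Proof. destruct s, t; simpl; intros; subst; auto. Qed.

Lemma height_eq_at_two_points (s t : segment) x1 x2 : x1 <> x2 ->
  height s x1 = height t x1 -> height s x2 = height t x2 -> slope s = slope t /\ icept s = icept t.
Proof.
  unfold height; intros Hx H1 H2.
  assert (Hs : slope s = slope t).
  { assert (Hprod : (slope s - slope t) * (x1 - x2) = 0) by lra.
    apply Rmult_integral in Hprod; destruct Hprod; lra. }
  split; auto. rewrite Hs in H1; lra.
Qed.

Lemma collinear_in_seg_eq V E s t z : drawing V E -> In s E -> In t E ->
  slope s = slope t -> icept s = icept t -> in_seg s z -> in_seg t z -> s = t.
Proof.
  intros D Hs Ht Hsl Hic [Hzs _] [Hzt _].
  assert (Hl : forall u v, In u E -> In v E -> slope u = slope v -> icept u = icept v ->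
            xleft u < xleft v < xright u -> False).
  { intros u v Hu Hv Hsl' Hic' Hx.
    apply (vertex_not_in_seg _ _ D u (lend v) Hu (lend_vertex _ _ D v Hv)).
    unfold in_seg, lend, height; simpl; split; auto. rewrite Hsl', Hic'; auto. }
  assert (Hr : forall u v, In u E -> In v E -> slope u = slope v -> icept u = icept v ->
            xleft u < xright v < xright u -> False).
  { intros u v Hu Hv Hsl' Hic' Hx.
    apply (vertex_not_in_seg _ _ D u (rend v) Hu (rend_vertex _ _ D v Hv)).
    unfold in_seg, rend, height; simpl; split; auto. rewrite Hsl', Hic'; auto. }
  apply segment_eq; auto.
  - destruct (Rtotal_order (xleft s) (xleft t)) as [H|[H|H]]; auto; exfalso.
    + apply (Hl s t); auto; lra.
    + apply (Hl t s); auto; lra.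
  - destruct (Rtotal_order (xright s) (xright t)) as [H|[H|H]]; auto; exfalso.
    + apply (Hr t s); auto; lra.
    + apply (Hr s t); auto; lra.
Qed.

Lemma crossing_free_in_seg_eq V E s t z : drawing V E -> crossing_free E -> In s E -> In t E ->
  in_seg s z -> in_seg t z -> s = t.
Proof.
  intros D NC Hs Ht Hzs Hzt.
  pose proof (xleft_lt_xright _ _ D s Hs). pose proof (xleft_lt_xright _ _ D t Ht).
  destruct (classic (exists w, (w = lend s \/ w = rend s) /\ (w = lend t \/ w = rend t)))
    as [[w [Hws Hwt]]|Hshared].
  - destruct Hzs as [Hzs1 Hzs2], Hzt as [Hzt1 Hzt2].
    assert (Hw : height s (fst w) = height t (fst w) /\ fst w <> fst z).
    { destruct Hws as [-> | ->]; destruct Hwt as [Hwt|Hwt];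
        unfold lend, rend in *; inversion Hwt; simpl; split; auto; lra. }
    destruct Hw as [Hw Hwz].
    destruct (height_eq_at_two_points s t (fst w) (fst z)) as [Hsl Hic]; auto; [congruence|].
    apply (collinear_in_seg_eq V E s t z); auto; split; auto.
  - exfalso. apply (NC s t Hs Ht). split.
    + apply NoDup_four; try apply (lend_neq_rend V E); auto;
        intro Heq; apply Hshared; eauto.
    + exists z. destruct Hzs, Hzt; unfold on_seg; repeat split; auto; lra.
Qed.

Lemma on_seg_cases s z : on_seg s z -> in_seg s z \/ z = lend s \/ z = rend s.
Proof.
  destruct z as [x y]; unfold on_seg, in_seg, lend, rend; simpl; intros [[H1 H2] ->].
  destruct H1 as [H1| <-]; [destruct H2 as [H2| ->]|]; auto.
Qed.

Lemma vertex_on_seg_end V E s v : drawing V E -> In s E -> In v V -> on_seg s v ->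
  v = lend s \/ v = rend s.
Proof.
  intros D Hs Hv Hon. destruct (on_seg_cases s v Hon) as [Hin|]; auto.
  exfalso; apply (vertex_not_in_seg _ _ D s v); auto.
Qed.

Lemma crossing_in_seg V E s t : drawing V E -> In s E -> In t E -> crossing s t ->
  exists z, in_seg s z /\ in_seg t z.
Proof.
  intros D Hs Ht [ND [z [Hzs Hzt]]].
  assert (Hends : lend s <> lend t /\ lend s <> rend t /\ rend s <> lend t /\ rend s <> rend t).
  { inversion ND as [|? ? N1 N2]; inversion N2 as [|? ? N3 N4]; inversion N4 as [|? ? N5 _].
    simpl in *; intuition. }
  assert (Hs_end : forall v, v = lend s \/ v = rend s -> ~ on_seg t v).
  { intros v Hv Hon.
    assert (HvV : In v V) by (apply (ends_incl V E s D Hs); destruct Hv as [->| ->]; simpl; auto).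
    destruct (vertex_on_seg_end V E t v D Ht HvV Hon); intuition congruence. }
  assert (Ht_end : forall v, v = lend t \/ v = rend t -> ~ on_seg s v).
  { intros v Hv Hon.
    assert (HvV : In v V) by (apply (ends_incl V E t D Ht); destruct Hv as [->| ->]; simpl; auto).
    destruct (vertex_on_seg_end V E s v D Hs HvV Hon); intuition congruence. }
  exists z; split.
  - destruct (on_seg_cases s z Hzs) as [|[->| ->]]; auto; exfalso; revert Hzt; apply Hs_end; auto.
  - destruct (on_seg_cases t z Hzt) as [|[->| ->]]; auto; exfalso; revert Hzs; apply Ht_end; auto.
Qed.

Lemma crossing_same_lines_eq V E s t s' t' : drawing V E ->
  In s E -> In t E -> In s' E -> In t' E -> crossing s t -> crossing s' t' ->
  slope s = slope s' -> icept s = icept s' -> slope t = slope t' -> icept t = icept t' ->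
  s = s' /\ t = t'.
Proof.
  intros D Hs Ht Hs' Ht' C C' Hsl Hic Htl Hti.
  destruct (crossing_in_seg V E s t D Hs Ht C) as [z [[Hzs1 Hzs2] [Hzt1 Hzt2]]].
  destruct (crossing_in_seg V E s' t' D Hs' Ht' C') as [z' [[Hzs1' Hzs2'] [Hzt1' Hzt2']]].
  destruct (Req_dec (fst z) (fst z')) as [Ex|Nx].
  - assert (z = z').
    { destruct z as [x y], z' as [x' y']; simpl in *. f_equal; auto.
      rewrite Hzs2, Hzs2', <- Ex. unfold height. rewrite Hsl, Hic. reflexivity. }
    subst z'. split.
    + apply (collinear_in_seg_eq V E s s' z); auto; split; auto.
    + apply (collinear_in_seg_eq V E t t' z); auto; split; auto.
  - exfalso.
    assert (Hz' : height s (fst z') = height t (fst z'))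
      by (unfold height in *; rewrite Hsl, Hic, Htl, Hti; congruence).
    destruct (height_eq_at_two_points s t (fst z) (fst z')) as [Hl Hi]; auto; [congruence|].
    assert (s = t) by (apply (collinear_in_seg_eq V E s t z); auto; split; auto).
    subst t. destruct C as [ND _]. inversion ND; simpl in *; tauto.
Qed.

(** * Crossing-free drawings have at most 4|V| edges *)

Lemma affine_root a b x1 x2 : x1 < x2 -> a * x1 + b <> 0 -> (a * x1 + b) * (a * x2 + b) <= 0 ->
  exists x, x1 < x <= x2 /\ a * x + b = 0 /\ ((a * x1 + b) * (a * x2 + b) < 0 -> x < x2).
Proof.
  intros Hx H1 H12.
  assert (Hslope : (a * x2 + b) - (a * x1 + b) = a * (x2 - x1)) by ring.
  assert (Hsign : (0 < a * x1 + b /\ a * x2 + b <= 0 /\ a < 0) \/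
                  (a * x1 + b < 0 /\ 0 <= a * x2 + b /\ 0 < a)).
  { destruct (Rlt_dec 0 (a * x1 + b)); [left|right].
    - assert (a * x2 + b <= 0) by nra.
      assert (a < 0); [|lra]. destruct (Rlt_or_le a 0); auto.
      assert (0 <= a * (x2 - x1)) by (apply Rmult_le_pos; lra). lra.
    - assert (a * x1 + b < 0) by lra. assert (0 <= a * x2 + b) by nra.
      assert (0 < a); [|lra]. destruct (Rlt_or_le 0 a); auto.
      assert (0 <= - a * (x2 - x1)) by (apply Rmult_le_pos; lra). lra. }
  assert (Ha : a <> 0) by lra.
  exists (- b / a).
  assert (Hl : (- b / a - x1) * a = - (a * x1 + b)) by (field; auto).
  assert (Hr : (x2 - - b / a) * a = a * x2 + b) by (field; auto).
  repeat split; [| |field; auto|].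
  1-2: destruct Hsign as [(? & ? & ?)|(? & ? & ?)]; nra.
  intros Hs. assert (a * x2 + b <> 0) by (intros E; rewrite E in Hs; lra).
  destruct Hsign as [(? & ? & ?)|(? & ? & ?)]; nra.
Qed.

Lemma affine_pos_right a b x0 : a * x0 + b > 0 ->
  exists d, d > 0 /\ forall x, x0 <= x <= x0 + d -> a * x + b > 0.
Proof.
  intros H. destruct (Rle_dec 0 a).
  - exists 1; split; [lra|]. intros x Hx. nra.
  - exists ((a * x0 + b) / (- a) / 2).
    assert (Hd : (a * x0 + b) / (- a) / 2 * (- a) = (a * x0 + b) / 2) by (field; lra).
    split; [|intros x Hx]; nra.
Qed.

Lemma height_lt_right (g1 h1 g2 h2 : segment) x0 X : x0 < X ->
  height g1 x0 < height h1 x0 -> height g2 x0 < height h2 x0 ->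
  exists x, x0 < x < X /\ height g1 x < height h1 x /\ height g2 x < height h2 x.
Proof.
  unfold height; intros HX H1 H2.
  destruct (affine_pos_right (slope h1 - slope g1) (icept h1 - icept g1) x0) as [d1 [Hd1 P1]]; [lra|].
  destruct (affine_pos_right (slope h2 - slope g2) (icept h2 - icept g2) x0) as [d2 [Hd2 P2]]; [lra|].
  set (d := Rmin (Rmin d1 d2) ((X - x0) / 2)).
  assert (Hd : 0 < d /\ d <= d1 /\ d <= d2 /\ d <= (X - x0) / 2).
  { unfold d, Rmin; repeat destruct Rle_dec; repeat split; lra. }
  exists (x0 + d).
  assert (Q1 := P1 (x0 + d) ltac:(lra)). assert (Q2 := P2 (x0 + d) ltac:(lra)).
  repeat split; lra.
Qed.

Lemma crossing_free_sign_change V E g h x1 x2 : drawing V E -> crossing_free E -> In g E -> In h E ->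
  xleft g <= x1 -> xleft h <= x1 -> x1 < x2 -> x2 <= xright g -> x2 <= xright h ->
  height g x1 <> height h x1 -> (height g x1 - height h x1) * (height g x2 - height h x2) <= 0 ->
  height g x2 = height h x2 /\ x2 = xright g /\ x2 = xright h.
Proof.
  intros D NC Hg Hh Hg1 Hh1 Hx Hg2 Hh2 Hne Hsign.
  assert (Hgh : g <> h) by (intros ->; auto).
  assert (Hdiff : forall x, (slope g - slope h) * x + (icept g - icept h) = height g x - height h x)
    by (intros; unfold height; ring).
  destruct (affine_root (slope g - slope h) (icept g - icept h) x1 x2) as [x [Hx' [Hroot _]]];
    rewrite ?Hdiff; auto; [lra|].
  rewrite Hdiff in Hroot.
  assert (Hmeet : height g x = height h x) by lra.
  assert (Hinside : x < xright g -> x < xright h -> False).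
  { intros Hxg Hxh. apply Hgh, (crossing_free_in_seg_eq V E g h (x, height g x)); auto;
      unfold in_seg; simpl; repeat split; auto; lra. }
  assert (Hx2 : x = x2) by (destruct (Rlt_or_le x x2); [exfalso; apply Hinside|]; lra).
  subst x.
  destruct (Req_dec x2 (xright g)) as [Eg|Ng], (Req_dec x2 (xright h)) as [Eh|Nh]; auto; exfalso.
  - apply (vertex_not_in_seg _ _ D h (rend g) Hh (rend_vertex _ _ D g Hg)).
    unfold in_seg, rend; simpl; rewrite <- Eg; split; auto; lra.
  - apply (vertex_not_in_seg _ _ D g (rend h) Hg (rend_vertex _ _ D h Hh)).
    unfold in_seg, rend; simpl; rewrite <- Eh; split; auto; lra.
  - apply Hinside; lra.
Qed.

Definition upper_neighbour (E : list segment) (s s' : segment) : Prop :=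
  In s' E /\ rend s' = rend s /\ slope s' < slope s /\
  forall g, In g E -> rend g = rend s -> slope g < slope s -> slope g <= slope s'.

Definition in_wedge (V : list point) (s s' : segment) (w : point) : Prop :=
  In w V /\ xleft s <= fst w /\ xleft s' <= fst w /\ fst w < xright s /\
  height s (fst w) <= snd w <= height s' (fst w).

Definition rightmost_in_wedge (V : list point) (s s' : segment) (u : point) : Prop :=
  in_wedge V s s' u /\ forall w, in_wedge V s s' w -> fst w <= fst u.

Lemma rend_eq (s t : segment) : rend s = rend t ->
  xright s = xright t /\ height s (xright s) = height t (xright s).
Proof. unfold rend; intros H; inversion H as [[Hx Hy]]; split; congruence. Qed.

Lemma slope_lt_of_meet_right (g s : segment) x X : x < X ->
  height g X = height s X -> height s x < height g x -> slope g < slope s.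
Proof. unfold height; intros. nra. Qed.

Lemma upper_neighbour_above E s s' x : upper_neighbour E s s' -> x < xright s ->
  height s x < height s' x.
Proof.
  intros (_ & Hr & Hsl & _) Hx. destruct (rend_eq _ _ Hr) as [HX HY]. rewrite HX in HY.
  unfold height in *. nra.
Qed.

Lemma wedge_empty_right_of_rightmost V E s s' u g z :
  drawing V E -> crossing_free E -> In s E -> upper_neighbour E s s' ->
  rightmost_in_wedge V s s' u -> In g E -> on_seg g z ->
  fst u < fst z < xright s -> height s (fst z) < snd z < height s' (fst z) -> False.
Proof.
  intros D NC Hs Hup [(_ & Hus & Hus' & _) Hmax] Hg [Hzg Hzh] Hzx Hzy.
  pose proof Hup as (Hs' & Hr & _ & Hnext).
  destruct (rend_eq _ _ Hr) as [HX HY]. rewrite HX in HY. rewrite Hzh in Hzy.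
  destruct z as [x1 y1]; simpl in *.
  destruct (Rlt_le_dec (xright g) (xright s)) as [HgX|HgX].
  - (* [g] can neither end inside the wedge, right of [u], nor leave it across [s] or [s']. *)
    destruct (Rlt_le_dec (height g (xright g)) (height s' (xright g))) as [Hbelow|Habove];
      [destruct (Rlt_le_dec (height s (xright g)) (height g (xright g))) as [Habove'|Hbelow']|].
    + assert (Hw : fst (rend g) <= fst u).
      { apply Hmax. unfold in_wedge, rend; simpl.
        repeat split; try apply (rend_vertex _ _ D g Hg); lra. }
      unfold rend in Hw; simpl in Hw. lra.
    + assert (x1 < xright g) by (destruct (Req_dec x1 (xright g)) as [->|]; lra).
      destruct (crossing_free_sign_change V E g s x1 (xright g)) as (_ & _ & Hend); auto; try lra; nra.
    + assert (x1 < xright g) by (destruct (Req_dec x1 (xright g)) as [->|]; lra).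
      destruct (crossing_free_sign_change V E g s' x1 (xright g)) as (_ & _ & Hend); auto; try lra; nra.
  - assert (Hmeet : height g (xright s) = height s (xright s) /\ xright s = xright g).
    { destruct (Rle_dec (height g (xright s)) (height s (xright s))).
      - destruct (crossing_free_sign_change V E g s x1 (xright s)) as (? & ? & _); auto; try lra; nra.
      - destruct (crossing_free_sign_change V E g s' x1 (xright s)) as (? & ? & _); auto; try lra; nra. }
    destruct Hmeet as [Hgs HgX'].
    assert (Hrg : rend g = rend s) by (unfold rend; rewrite <- HgX', Hgs; auto).
    assert (Hlt : slope g < slope s) by (apply (slope_lt_of_meet_right g s x1 (xright s)); lra).
    assert (Hgt : slope s' < slope g) by (apply (slope_lt_of_meet_right s' g x1 (xright s)); lra).
    specialize (Hnext g Hg Hrg Hlt). lra.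
Qed.

(* Recording where [u] sits (on [s'], on [s], strictly between) makes the charge injective, so
   each vertex absorbs at most three charges. *)
Definition wedge_position (s s' : segment) (u : point) (k : nat) : Prop :=
  (k = 0%nat /\ snd u = height s' (fst u)) \/ (k = 1%nat /\ snd u = height s (fst u)) \/
  (k = 2%nat /\ height s (fst u) < snd u < height s' (fst u)).

Definition charge (V : list point) (E : list segment) (s : segment) (uk : point * nat) : Prop :=
  exists s', upper_neighbour E s s' /\ rightmost_in_wedge V s s' (fst uk) /\
             wedge_position s s' (fst uk) (snd uk).

Lemma charge_inj V E s1 s2 uk : drawing V E -> crossing_free E -> In s1 E -> In s2 E ->
  charge V E s1 uk -> charge V E s2 uk -> s1 = s2.
Proof.
  intros D NC H1 H2 [s1' (T1 & M1 & Y1)] [s2' (T2 & M2 & Y2)].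
  destruct uk as [[x0 y0] k]; simpl in *.
  pose proof M1 as [(_ & Hl1 & _ & Hx1 & _) _]. pose proof M2 as [(_ & Hl2 & _ & Hx2 & _) _].
  simpl in *.
  pose proof (upper_neighbour_above _ _ _ _ T1 Hx1).
  pose proof (upper_neighbour_above _ _ _ _ T2 Hx2).
  assert (Hcross : height s1 x0 < height s2' x0 /\ height s2 x0 < height s1' x0).
  { unfold wedge_position in Y1, Y2; simpl in Y1, Y2.
    destruct Y1 as [[-> Y1]|[[-> Y1]|[-> Y1]]]; destruct Y2 as [[E2 Y2]|[[E2 Y2]|[E2 Y2]]];
      try discriminate; lra. }
  destruct (height_lt_right s1 s2' s2 s1' x0 (Rmin (xright s1) (xright s2))) as (x & Hx & Hx12 & Hx21);
    [apply Rmin_glb_lt; auto|tauto|tauto|].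
  pose proof (Rmin_l (xright s1) (xright s2)). pose proof (Rmin_r (xright s1) (xright s2)).
  pose proof (upper_neighbour_above _ _ _ x T1 ltac:(lra)).
  pose proof (upper_neighbour_above _ _ _ x T2 ltac:(lra)).
  destruct (Rtotal_order (height s1 x) (height s2 x)) as [C|[C|C]].
  - exfalso. apply (wedge_empty_right_of_rightmost V E s1 s1' (x0, y0) s2 (x, height s2 x)); auto;
      unfold on_seg; simpl; repeat split; lra.
  - apply (crossing_free_in_seg_eq V E s1 s2 (x, height s1 x)); auto;
      unfold in_seg; simpl; repeat split; lra.
  - exfalso. apply (wedge_empty_right_of_rightmost V E s2 s2' (x0, y0) s1 (x, height s1 x)); auto;
      unfold on_seg; simpl; repeat split; lra.
Qed.

Definition min_slope_at_rend (E : list segment) (s : segment) : Prop :=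
  forall g, In g E -> rend g = rend s -> slope s <= slope g.

Lemma upper_neighbour_exists E s : ~ min_slope_at_rend E s -> exists s', upper_neighbour E s s'.
Proof.
  intros Hnmin.
  assert (Hbelow : exists g, In g E /\ (rend g = rend s /\ slope g < slope s)).
  { apply NNPP; intro Hno; apply Hnmin. intros g Hg Hr.
    apply Rnot_lt_le; intro; apply Hno; eauto. }
  destruct (list_argmax_filter slope _ E Hbelow) as (s' & Hs' & [Hr Hlt] & Hmax).
  exists s'. repeat split; auto.
Qed.

Lemma rightmost_in_wedge_exists V E s s' : drawing V E -> In s E -> upper_neighbour E s s' ->
  exists u, rightmost_in_wedge V s s' u.
Proof.
  intros D Hs Hup. pose proof Hup as (Hs' & Hr & _ & _).
  pose proof (xleft_lt_xright _ _ D s Hs). pose proof (xleft_lt_xright _ _ D s' Hs').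
  destruct (rend_eq _ _ Hr) as [HX _].
  assert (Hne : exists w, In w V /\ in_wedge V s s' w).
  { destruct (Rle_dec (xleft s') (xleft s)).
    - exists (lend s). pose proof (upper_neighbour_above _ _ _ (xleft s) Hup ltac:(lra)).
      pose proof (lend_vertex _ _ D s Hs).
      unfold in_wedge, lend in *; simpl; repeat split; auto; lra.
    - exists (lend s'). pose proof (upper_neighbour_above _ _ _ (xleft s') Hup ltac:(lra)).
      pose proof (lend_vertex _ _ D s' Hs').
      unfold in_wedge, lend in *; simpl; repeat split; auto; lra. }
  destruct (list_argmax_filter fst _ V Hne) as (u & _ & Hu & Hmax).
  exists u; split; auto. intros w Hw; apply Hmax; auto. apply Hw.
Qed.

Lemma charge_exists V E s : drawing V E -> In s E -> ~ min_slope_at_rend E s ->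
  exists uk, In uk (list_prod V [0%nat; 1%nat; 2%nat]) /\ charge V E s uk.
Proof.
  intros D Hs Hnmin.
  destruct (upper_neighbour_exists E s Hnmin) as [s' Hup].
  destruct (rightmost_in_wedge_exists V E s s' D Hs Hup) as [u Hu].
  pose proof Hu as [(HuV & _ & _ & _ & Hy) _].
  assert (Hk : exists k, In k [0%nat; 1%nat; 2%nat] /\ wedge_position s s' u k).
  { unfold wedge_position. destruct (Req_dec (snd u) (height s' (fst u))).
    - exists 0%nat; simpl; auto.
    - destruct (Req_dec (snd u) (height s (fst u))).
      + exists 1%nat; simpl; auto.
      + exists 2%nat; simpl; split; auto; right; right; split; auto; lra. }
  destruct Hk as [k [Hk Hpos]].
  exists (u, k); split; [apply in_prod; auto|]. exists s'; auto.
Qed.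

Lemma min_slope_rend_inj V E s t : drawing V E -> In s E -> In t E ->
  min_slope_at_rend E s -> min_slope_at_rend E t -> rend s = rend t -> s = t.
Proof.
  intros D Hs Ht Ms Mt Hr.
  assert (Hsl : slope s = slope t) by (specialize (Ms t Ht (eq_sym Hr)); specialize (Mt s Hs Hr); lra).
  destruct (rend_eq s t Hr) as [HX HY].
  assert (Hic : icept s = icept t) by (unfold height in HY; rewrite Hsl in HY; lra).
  pose proof (xleft_lt_xright _ _ D s Hs). pose proof (xleft_lt_xright _ _ D t Ht).
  set (x := (Rmax (xleft s) (xleft t) + xright s) / 2).
  pose proof (Rmax_l (xleft s) (xleft t)). pose proof (Rmax_r (xleft s) (xleft t)).
  assert (Rmax (xleft s) (xleft t) < xright s) by (apply Rmax_lub_lt; lra).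
  apply (collinear_in_seg_eq V E s t (x, height s x)); auto;
    unfold in_seg, x; simpl; repeat split; try lra.
  unfold height; rewrite Hsl, Hic; auto.
Qed.

Lemma crossing_free_edge_bound V E : drawing V E -> crossing_free E -> (length E <= 4 * length V)%nat.
Proof.
  intros D NC.
  set (ismin := fun s => asbool (min_slope_at_rend E s)).
  rewrite <- (filter_length ismin E).
  assert (Hmin : (length (filter ismin E) <= length V)%nat).
  { apply (NoDup_length_le_rel _ _ (fun s v => v = rend s)).
    - apply NoDup_filter, (drawing_NoDup_edges _ _ D).
    - intros s Hs. apply filter_In in Hs. exists (rend s); split; auto.
      apply (rend_vertex _ _ D); tauto.
    - intros s t v Hs Ht -> Hr. apply filter_In in Hs, Ht.
      destruct Hs as [Hs Ms], Ht as [Ht Mt]. apply asboolW in Ms, Mt.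
      apply (min_slope_rend_inj V E); auto. }
  assert (Hother : (length (filter (fun s => negb (ismin s)) E) <=
                    length (list_prod V [0%nat; 1%nat; 2%nat]))%nat).
  { apply (NoDup_length_le_rel _ _ (charge V E)).
    - apply NoDup_filter, (drawing_NoDup_edges _ _ D).
    - intros s Hs. apply filter_In in Hs. destruct Hs as [Hs Ms].
      apply (charge_exists V E s D Hs). intro Hm. apply asboolT in Hm.
      unfold ismin in Ms. rewrite Hm in Ms; discriminate.
    - intros s t uk Hs Ht. apply filter_In in Hs, Ht. apply (charge_inj V E); tauto. }
  rewrite length_prod in Hother. simpl in Hother. lia.
Qed.

(** * The crossing lemma *)

Definition crossings (E : list segment) : nat :=
  length (filter (fun p => asbool (crossing (fst p) (snd p))) (list_prod E E)).

Lemma drawing_incl V E E' : drawing V E -> NoDup E' -> incl E' E -> drawing V E'.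
Proof.
  intros D N I. constructor; auto; intros; [apply (drawing_NoDup_vertices _ _ D)| | | |];
    [apply (xleft_lt_xright _ _ D)|apply (lend_vertex _ _ D)|apply (rend_vertex _ _ D)
    |apply (vertex_not_in_seg _ _ D)]; auto.
Qed.

Lemma crossings_without E s t : NoDup E -> In s E -> In t E -> crossing s t ->
  (S (crossings (without s E)) <= crossings E)%nat.
Proof.
  intros N Hs Ht C. unfold crossings.
  change (S (length ?l)) with (length ((s, t) :: l)). apply NoDup_incl_length.
  - constructor.
    + intro Hin. apply filter_In in Hin. destruct Hin as [Hin _]. apply in_prod_iff in Hin.
      destruct Hin as [Hin _]. apply In_without in Hin. tauto.
    + apply NoDup_filter, NoDup_list_prod; apply NoDup_filter; auto.
  - intros [x y] [Hxy|Hxy].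
    + inversion Hxy; subst. apply filter_In; split; [apply in_prod; auto|apply asboolT; auto].
    + apply filter_In in Hxy. destruct Hxy as [Hxy Hc]. apply filter_In; split; auto.
      apply in_prod_iff in Hxy. rewrite !In_without in Hxy. apply in_prod; tauto.
Qed.

Lemma edge_bound_crossings V E : drawing V E -> (length E <= 4 * length V + crossings E)%nat.
Proof.
  remember (length E) as n eqn:Hn. revert E Hn.
  induction n as [n IH] using lt_wf_ind; intros E Hn D.
  destruct (classic (crossing_free E)) as [NC|NC].
  - pose proof (crossing_free_edge_bound V E D NC); lia.
  - assert (Hst : exists s t, In s E /\ In t E /\ crossing s t).
    { apply NNPP; intro Hno; apply NC. intros s t Hs Ht C; apply Hno; eauto. }
    destruct Hst as (s & t & Hs & Ht & C).
    pose proof (drawing_NoDup_edges _ _ D) as N.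
    pose proof (length_without s E N Hs) as Hlen.
    assert (D' : drawing V (without s E)).
    { apply (drawing_incl V E); [auto|apply NoDup_filter; auto|intros x; rewrite In_without; tauto]. }
    pose proof (IH (length (without s E)) ltac:(lia) _ eq_refl D').
    pose proof (crossings_without E s t N Hs Ht C). lia.
Qed.

Lemma crossings_pos_vertices V E : drawing V E -> (0 < crossings E)%nat -> (4 <= length V)%nat.
Proof.
  intros D Hcr. unfold crossings in Hcr.
  destruct (filter (fun p => asbool (crossing (fst p) (snd p))) (list_prod E E)) as [|[s t] l] eqn:Ecr;
    [simpl in Hcr; lia|].
  assert (Hin : In (s, t) (filter (fun p => asbool (crossing (fst p) (snd p))) (list_prod E E)))
    by (rewrite Ecr; simpl; auto).
  apply filter_In in Hin. destruct Hin as [Hst C]. apply in_prod_iff in Hst. apply asboolW in C.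
  destruct C as [ND _]. change 4%nat with (length [lend s; rend s; lend t; rend t]).
  apply NoDup_incl_length; auto.
  apply (incl_app (ends_incl V E s D ltac:(tauto)) (ends_incl V E t D ltac:(tauto))).
Qed.

Section Colorings.
Local Open Scope nat_scope.

Definition recolor (c : point -> nat) (v : point) (j : nat) : point -> nat :=
  fun p => if asbool (p = v) then j else c p.

(* Each map from [V] to [{0, ..., m-1}] occurs exactly once, extended by [0] outside [V]. *)
Fixpoint colorings (m : nat) (V : list point) : list (point -> nat) :=
  match V with
  | [] => [fun _ => 0]
  | v :: V' => flat_map (fun c => map (recolor c v) (seq 0 m)) (colorings m V')
  end.

Definition colored (c : point -> nat) (j : nat) (U : list point) : Prop := Forall (fun x => c x = j) U.

Lemma colored_app c j U1 U2 : colored c j (U1 ++ U2) <-> colored c j U1 /\ colored c j U2.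
Proof. apply Forall_app. Qed.

Lemma colored_recolor_notin c v j k U : ~ In v U -> colored (recolor c v j) k U <-> colored c k U.
Proof.
  intros Hv. unfold colored. rewrite !Forall_forall.
  assert (Heq : forall x, In x U -> recolor c v j x = c x).
  { intros x Hx. unfold recolor. rewrite (proj2 (asboolF _)); auto. intros ->; auto. }
  split; intros H x Hx; [rewrite <- Heq|rewrite Heq]; auto.
Qed.

Lemma colored_recolor_in c v j k U : In v U ->
  colored (recolor c v j) k U <-> j = k /\ colored c k (without v U).
Proof.
  intros Hv. unfold colored. rewrite !Forall_forall. split.
  - intros H. split.
    + specialize (H v Hv). unfold recolor in H. rewrite asboolT in H; auto.
    + intros x Hx. apply In_without in Hx. destruct Hx as [Hx Hne].
      specialize (H x Hx). unfold recolor in H. rewrite (proj2 (asboolF _)) in H; auto.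
  - intros [<- H] x Hx. unfold recolor. destruct (asbool (x = v)) eqn:E; auto.
    apply H, In_without. split; auto. apply asboolF, E.
Qed.

Lemma count_recolor_in m c v j U : In v U -> j < m ->
  length (filter (fun i => asbool (colored (recolor c v i) j U)) (seq 0 m)) =
  if asbool (colored c j (without v U)) then 1 else 0.
Proof.
  intros Hv Hj.
  rewrite (filter_ext _ (fun i => asbool (i = j /\ colored c j (without v U))))
    by (intros i; apply asbool_iff, colored_recolor_in; auto).
  destruct (asbool (colored c j (without v U))) eqn:Ec.
  - rewrite (filter_ext _ (fun i => asbool (i = j))).
    + apply length_filter_eq_NoDup; [apply seq_NoDup|apply in_seq; lia].
    + intros i; apply asbool_iff. apply asboolW in Ec. tauto.
  - rewrite (filter_ext _ (fun _ => false)), filter_false; auto.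
    intros i; apply asboolF. apply asboolF in Ec. tauto.
Qed.

Lemma count_recolor_notin m c v j U : ~ In v U ->
  length (filter (fun i => asbool (colored (recolor c v i) j U)) (seq 0 m)) =
  m * if asbool (colored c j U) then 1 else 0.
Proof.
  intros Hv.
  rewrite (filter_ext _ (fun _ => asbool (colored c j U)))
    by (intros i; apply asbool_iff, colored_recolor_notin; auto).
  destruct (asbool (colored c j U)).
  - rewrite filter_true, length_seq; lia.
  - rewrite filter_false; simpl; lia.
Qed.

Lemma count_colored m V : forall U j, NoDup V -> NoDup U -> incl U V -> j < m ->
  length (filter (fun c => asbool (colored c j U)) (colorings m V)) = m ^ (length V - length U).
Proof.
  induction V as [|v V IH]; intros U j NV NU IU Hj.
  - destruct U as [|u U]; [|destruct (IU u); simpl; auto].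
    simpl. rewrite asboolT; [reflexivity|constructor].
  - inversion NV as [|? ? Hv NV']; subst. simpl colorings.
    rewrite length_filter_flat_map, (map_ext _ _ (fun c => length_filter_map _ _ _)).
    destruct (classic (In v U)) as [HvU|HvU].
    + rewrite (map_ext _ _ (fun c => count_recolor_in m c v j U HvU Hj)), <- length_filter_as_sum.
      rewrite IH, (length_without v U); auto.
      * apply NoDup_filter; auto.
      * intros y Hy. apply In_without in Hy. destruct Hy as [Hy Hne].
        destruct (IU y Hy) as [->|]; tauto.
    + rewrite (map_ext _ _ (fun c => count_recolor_notin m c v j U HvU)).
      rewrite list_sum_map_mul_l, <- length_filter_as_sum, IH; auto.
      * assert (length U <= length V).
        { apply NoDup_incl_length; auto. intros y Hy; destruct (IU y Hy) as [->|]; tauto. }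
        simpl length. replace (S (length V) - length U) with (S (length V - length U)) by lia.
        reflexivity.
      * intros y Hy; destruct (IU y Hy) as [->|]; tauto.
Qed.

Definition color_choices (m : nat) (V : list point) : list (nat * (point -> nat)) :=
  list_prod (seq 0 m) (colorings m V).

Lemma count_color_choices m V U : NoDup V -> NoDup U -> incl U V ->
  length (filter (fun jc => asbool (colored (snd jc) (fst jc) U)) (color_choices m V)) =
  m * m ^ (length V - length U).
Proof.
  intros NV NU IU. unfold color_choices. rewrite list_prod_as_flat_map, length_filter_flat_map.
  rewrite (map_ext_in _ (fun _ => m ^ (length V - length U))).
  - rewrite list_sum_map_const, length_seq; lia.
  - intros j Hj. apply in_seq in Hj. rewrite length_filter_map. simpl. apply count_colored; auto; lia.
Qed.

Definition class_vertices (c : point -> nat) (j : nat) (V : list point) : list point :=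
  filter (fun v => asbool (colored c j [v])) V.

Definition class_edges (c : point -> nat) (j : nat) (E : list segment) : list segment :=
  filter (fun s => asbool (colored c j [lend s; rend s])) E.

Lemma drawing_class V E c j : drawing V E -> drawing (class_vertices c j V) (class_edges c j E).
Proof.
  intros D. unfold class_vertices, class_edges.
  assert (Hclass : forall s, In s (filter (fun s => asbool (colored c j [lend s; rend s])) E) ->
                             In s E /\ c (lend s) = j /\ c (rend s) = j).
  { intros s Hs. apply filter_In in Hs. destruct Hs as [Hs Hc]. apply asboolW in Hc.
    inversion Hc as [|? ? ? Hc']; inversion Hc'; auto. }
  constructor.
  - apply NoDup_filter, (drawing_NoDup_vertices _ _ D).
  - apply NoDup_filter, (drawing_NoDup_edges _ _ D).
  - intros s Hs. apply (xleft_lt_xright _ _ D), Hclass, Hs.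
  - intros s Hs. destruct (Hclass s Hs) as (Hs' & Hl & _).
    apply filter_In; split; [apply (lend_vertex _ _ D); auto|apply asboolT; repeat constructor; auto].
  - intros s Hs. destruct (Hclass s Hs) as (Hs' & _ & Hr).
    apply filter_In; split; [apply (rend_vertex _ _ D); auto|apply asboolT; repeat constructor; auto].
  - intros s v Hs Hv. apply filter_In in Hv. apply (vertex_not_in_seg _ _ D); [apply Hclass|]; tauto.
Qed.

Lemma crossings_class c j E :
  crossings (class_edges c j E) =
  length (filter (fun p => asbool (crossing (fst p) (snd p) /\
                                  colored c j [lend (fst p); rend (fst p); lend (snd p); rend (snd p)]))
                 (list_prod E E)).
Proof.
  unfold crossings, class_edges. rewrite list_prod_filter, filter_filter. f_equal.
  apply filter_ext. intros [s t]; simpl. rewrite !asbool_andb. apply asbool_iff.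
  change [lend s; rend s; lend t; rend t] with ([lend s; rend s] ++ [lend t; rend t]).
  rewrite colored_app. tauto.
Qed.

Lemma sum_class_vertices m V : NoDup V ->
  list_sum (map (fun jc => length (class_vertices (snd jc) (fst jc) V)) (color_choices m V)) =
  length V * (m * m ^ (length V - 1)).
Proof.
  intros NV. unfold class_vertices.
  rewrite (sum_length_filter_swap (fun jc v => asbool (colored (snd jc) (fst jc) [v]))).
  rewrite (map_ext_in _ (fun _ => m * m ^ (length V - 1))), list_sum_map_const; [lia|].
  intros v Hv. apply count_color_choices; auto; [repeat constructor; auto|intros x [<-|[]]; auto].
Qed.

Lemma sum_class_edges m V E : drawing V E ->
  list_sum (map (fun jc => length (class_edges (snd jc) (fst jc) E)) (color_choices m V)) =
  length E * (m * m ^ (length V - 2)).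
Proof.
  intros D. unfold class_edges.
  rewrite (sum_length_filter_swap (fun jc s => asbool (colored (snd jc) (fst jc) [lend s; rend s]))).
  rewrite (map_ext_in _ (fun _ => m * m ^ (length V - 2))), list_sum_map_const; [lia|].
  intros s Hs. apply count_color_choices; [apply (drawing_NoDup_vertices _ _ D)| |].
  - pose proof (lend_neq_rend V E s D Hs). repeat constructor; simpl; intuition.
  - apply (ends_incl V E s D Hs).
Qed.

Lemma sum_class_crossings m V E : drawing V E ->
  list_sum (map (fun jc => crossings (class_edges (snd jc) (fst jc) E)) (color_choices m V)) =
  crossings E * (m * m ^ (length V - 4)).
Proof.
  intros D.
  rewrite (map_ext _ _ (fun jc => crossings_class (snd jc) (fst jc) E)).
  rewrite (sum_length_filter_swap (fun jc p => asbool (crossing (fst p) (snd p) /\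
      colored (snd jc) (fst jc) [lend (fst p); rend (fst p); lend (snd p); rend (snd p)]))).
  rewrite (map_ext_in _ (fun p => (m * m ^ (length V - 4)) *
                                  if asbool (crossing (fst p) (snd p)) then 1 else 0)).
  - rewrite list_sum_map_mul_l, <- length_filter_as_sum. unfold crossings. lia.
  - intros [s t] Hst. apply in_prod_iff in Hst. destruct Hst as [Hs Ht]. simpl.
    destruct (asbool (crossing s t)) eqn:C.
    + apply asboolW in C. pose proof C as [ND _].
      rewrite (filter_ext _
                 (fun jc => asbool (colored (snd jc) (fst jc) [lend s; rend s; lend t; rend t])))
        by (intros jc; apply asbool_iff; tauto).
      rewrite count_color_choices; auto; [simpl; lia|apply (drawing_NoDup_vertices _ _ D)|].
      apply (incl_app (ends_incl V E s D Hs) (ends_incl V E t D Ht)).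
    + apply asboolF in C. rewrite (filter_ext _ (fun _ => false)), filter_false; [simpl; lia|].
      intros jc; apply asboolF; tauto.
Qed.

Lemma crossing_lemma V E m : drawing V E -> 1 <= m ->
  length E * m ^ 2 <= 4 * length V * m ^ 3 + crossings E.
Proof.
  intros D Hm.
  destruct (Nat.eq_0_gt_0_cases (crossings E)) as [Hcr|Hcr].
  - pose proof (edge_bound_crossings V E D). assert (m ^ 2 <= m ^ 3) by (apply Nat.pow_le_mono_r; lia).
    nia.
  - pose proof (crossings_pos_vertices V E D Hcr) as HV.
    assert (Hsum : length E * (m * m ^ (length V - 2)) <=
                   4 * (length V * (m * m ^ (length V - 1))) + crossings E * (m * m ^ (length V - 4))).
    { rewrite <- (sum_class_edges m V E D), <- (sum_class_vertices m V (drawing_NoDup_vertices _ _ D)),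
        <- (sum_class_crossings m V E D), <- list_sum_map_mul_l, <- list_sum_map_add.
      apply list_sum_map_le. intros jc _. apply edge_bound_crossings, drawing_class, D. }
    replace (length V - 2) with ((length V - 4) + 2) in Hsum by lia.
    replace (length V - 1) with ((length V - 4) + 3) in Hsum by lia.
    rewrite !Nat.pow_add_r in Hsum.
    assert (Hk : 0 < m * m ^ (length V - 4))
      by (apply Nat.mul_pos_pos; [lia|apply Nat.neq_0_lt_0, Nat.pow_nonzero; lia]).
    apply (Nat.mul_le_mono_pos_l _ _ _ Hk). nia.
Qed.

End Colorings.

(** * The Szemeredi-Trotter bound *)

Definition line_of (s : segment) : line := NonVert (slope s) (icept s).

Definition consecutive_on (P : list point) (L : list line) (s : segment) : Prop :=
  In (line_of s) L /\ In (lend s) P /\ In (rend s) P /\ xleft s < xright s /\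
  forall r, In r P -> ~ in_seg s r.

Definition segments_along (P : list point) (l : line) : list segment :=
  match l with
  | NonVert a b => map (fun pq => Segment a b (fst (fst pq)) (fst (snd pq))) (list_prod P P)
  | Vert _ => []
  end.

Definition incidence_segments (P : list point) (L : list line) : list segment :=
  nodup (fun s t => excluded_middle_informative (s = t))
    (filter (fun s => asbool (consecutive_on P L s)) (flat_map (segments_along P) L)).

Lemma In_incidence_segments P L s : In s (incidence_segments P L) <-> consecutive_on P L s.
Proof.
  unfold incidence_segments. rewrite nodup_In, filter_In. split; [intros [_ H]; apply asboolW, H|].
  intros Hs. split; [|apply asboolT, Hs]. destruct Hs as (HL & Hl & Hr & _).
  apply in_flat_map. exists (line_of s); split; auto. simpl.
  apply in_map_iff. exists (lend s, rend s). split; [destruct s; reflexivity|apply in_prod; auto].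
Qed.

Lemma drawing_incidence_segments P L : NoDup P -> drawing P (incidence_segments P L).
Proof.
  intros NP. constructor; auto; [apply NoDup_nodup|..];
    intros s; [| | |intros v]; rewrite In_incidence_segments; intros (_ & Hl & Hr & Hx & Hno); auto.
Qed.

Lemma crossings_incidence_segments P L : NoDup P -> NoDup L ->
  (crossings (incidence_segments P L) <= length L * length L)%nat.
Proof.
  intros NP NL. pose proof (drawing_incidence_segments P L NP) as D.
  unfold crossings. rewrite <- length_prod.
  apply (NoDup_length_le_rel _ _ (fun st ll => ll = (line_of (fst st), line_of (snd st)))).
  - apply NoDup_filter, NoDup_list_prod; apply (drawing_NoDup_edges _ _ D).
  - intros [s t] Hst. apply filter_In in Hst. destruct Hst as [Hst _]. apply in_prod_iff in Hst.
    rewrite !In_incidence_segments in Hst. destruct Hst as [[Hs _] [Ht _]].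
    exists (line_of s, line_of t); split; [apply in_prod; auto|reflexivity].
  - intros [s t] [s' t'] ll Hst Hst' -> Heq. simpl in *.
    apply filter_In in Hst, Hst'. destruct Hst as [Hst C], Hst' as [Hst' C'].
    apply asboolW in C, C'. apply in_prod_iff in Hst, Hst'. simpl in *.
    unfold line_of in Heq. inversion Heq.
    destruct (crossing_same_lines_eq P _ s t s' t' D) as [-> ->]; auto; tauto.
Qed.

Lemma on_nonvertical_eq (p q : point) a b :
  on_line p (NonVert a b) -> on_line q (NonVert a b) -> fst p = fst q -> p = q.
Proof. destruct p, q; simpl; intros -> -> ->; reflexivity. Qed.

(* An incidence [(p, l)] is witnessed by [p] if [l] is vertical, by [l] if [p] is the rightmost
   point of [P] on [l], and otherwise by the segment from [p] to the next point of [P] on [l]. *)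
Definition incidence_witness (P : list point) (L : list line) (pl : point * line)
  (w : point + line + segment) : Prop :=
  match snd pl with
  | Vert _ => w = inl (inl (fst pl))
  | NonVert _ _ =>
      (w = inl (inr (snd pl)) /\ forall q, In q P -> on_line q (snd pl) -> fst q <= fst (fst pl)) \/
      (exists s, w = inr s /\ In s (incidence_segments P L) /\ lend s = fst pl /\ line_of s = snd pl)
  end.

Definition witnesses (P : list point) (L : list line) : list (point + line + segment) :=
  map (fun p => inl (inl p)) P ++ map (fun l => inl (inr l)) L ++ map inr (incidence_segments P L).

Lemma incidence_witness_exists P L p l : In p P -> In l L -> on_line p l ->
  exists w, In w (witnesses P L) /\ incidence_witness P L (p, l) w.
Proof.
  intros Hp Hl Hon. unfold incidence_witness, witnesses; simpl.
  destruct l as [a b|c].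
  2: { exists (inl (inl p)); split; auto. apply in_or_app; left; apply in_map_iff; eauto. }
  destruct (classic (exists q, In q P /\ (on_line q (NonVert a b) /\ fst p < fst q))) as [Hright|Hlast].
  - destruct (list_argmax_filter (fun q => - fst q) _ P Hright) as (q & Hq & [Hqon Hpq] & Hmin).
    set (s := Segment a b (fst p) (fst q)).
    assert (Hend : lend s = p /\ rend s = q).
    { unfold s, lend, rend, height; simpl. destruct p, q; simpl in *; subst; auto. }
    assert (Hx : xleft s = fst p /\ xright s = fst q) by auto.
    assert (Hs : In s (incidence_segments P L)).
    { apply In_incidence_segments. repeat split; try (rewrite ?(proj1 Hend), ?(proj2 Hend); auto).
      intros r Hr [Hrx Hry]. rewrite (proj1 Hx), (proj2 Hx) in Hrx.
      assert (Hr' := Hmin r Hr (conj Hry (proj1 Hrx))). simpl in Hr'. lra. }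
    exists (inr s). split; [apply in_or_app; right; apply in_or_app; right; apply in_map_iff; eauto|].
    right. exists s; repeat split; auto. apply Hend.
  - exists (inl (inr (NonVert a b))).
    split; [apply in_or_app; right; apply in_or_app; left; apply in_map_iff; eauto|].
    left; split; auto. intros q Hq Hqon. apply Rnot_lt_le; intros Hlt. apply Hlast; eauto.
Qed.

Lemma incidence_witness_inj P L p l p' l' w : In p P -> In p' P ->
  on_line p l -> on_line p' l' ->
  incidence_witness P L (p, l) w -> incidence_witness P L (p', l') w -> (p, l) = (p', l').
Proof.
  unfold incidence_witness; simpl. intros Hp Hp' Hon Hon' Hw Hw'.
  destruct l as [a b|c], l' as [a' b'|c']; simpl in *; subst.
  - destruct Hw as [[-> Hmax]|(s & -> & _ & Hls & Hlines)],
             Hw' as [[Hw' Hmax']|(s' & Hw' & _ & Hls' & Hlines')]; try discriminate.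
    + inversion Hw'; subst. f_equal. apply (on_nonvertical_eq _ _ a' b'); auto.
      specialize (Hmax p' Hp' Hon'). specialize (Hmax' p Hp Hon). lra.
    + inversion Hw'; subst. congruence.
  - destruct Hw as [[? _]|(s & ? & _)]; discriminate.
  - destruct Hw' as [[? _]|(s & ? & _)]; discriminate.
  - inversion Hw'; subst. congruence.
Qed.

Lemma incidences_le P L : NoDup P -> NoDup L ->
  (incidences P L <= length P + length L + length (incidence_segments P L))%nat.
Proof.
  intros NP NL. unfold incidences.
  replace (length P + length L + length (incidence_segments P L))%nat with (length (witnesses P L))
    by (unfold witnesses; rewrite !length_app, !length_map; lia).
  apply (NoDup_length_le_rel _ _ (incidence_witness P L)).
  - apply NoDup_filter, NoDup_list_prod; auto.
  - intros [p l] H. apply filter_In in H. destruct H as [H Hon]. apply in_prod_iff in H.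
    apply on_lineP in Hon. apply incidence_witness_exists; tauto.
  - intros [p l] [p' l'] w H H'. apply filter_In in H, H'.
    destruct H as [H Hon], H' as [H' Hon']. apply in_prod_iff in H, H'. apply on_lineP in Hon, Hon'.
    apply incidence_witness_inj; tauto.
Qed.

Lemma szemeredi_trotter_nat P L k : NoDup P -> NoDup L -> (1 <= k)%nat ->
  (incidences P L * k ^ 2 <=
   (length P + length L) * k ^ 2 + 4 * length P * k ^ 3 + length L * length L)%nat.
Proof.
  intros NP NL Hk.
  pose proof (incidences_le P L NP NL).
  pose proof (crossing_lemma P (incidence_segments P L) k (drawing_incidence_segments P L NP) Hk).
  pose proof (crossings_incidence_segments P L NP NL).
  nia.
Qed.

Lemma szemeredi_trotter P L k : NoDup P -> NoDup L -> (1 <= k)%nat ->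
  INR (incidences P L) <=
  INR (length P) + INR (length L) + 4 * INR (length P) * INR k + INR (length L) ^ 2 / INR k ^ 2.
Proof.
  intros NP NL Hk.
  pose proof (szemeredi_trotter_nat P L k NP NL Hk) as H. apply le_INR in H.
  rewrite !plus_INR, !mult_INR, !pow_INR, plus_INR in H. simpl (INR 4) in H.
  assert (Hk' : 1 <= INR k) by (apply (le_INR 1); auto).
  apply (Rmult_le_reg_r (INR k ^ 2)); [apply pow_lt; lra|].
  replace ((INR (length P) + INR (length L) + 4 * INR (length P) * INR k +
            INR (length L) ^ 2 / INR k ^ 2) * INR k ^ 2)
    with ((INR (length P) + INR (length L)) * INR k ^ 2 + 4 * INR (length P) * INR k ^ 3 +
          INR (length L) * INR (length L)) by (field; lra).
  lra.
Qed.

(** * Choosing the parameter *)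

Lemma exists_nat_between t : 1 <= t -> exists k : nat, (1 <= k)%nat /\ t <= INR k <= 2 * t.
Proof.
  intros Ht. destruct (archimed t) as [H1 H2].
  assert (Hz : (0 < up t)%Z) by (apply lt_IZR; simpl; lra).
  exists (Z.to_nat (up t)). rewrite INR_IZR_INZ, Z2Nat.id by lia. split; [lia|lra].
Qed.

Lemma lines_term_le (A B J M Lam Ln K theta : R) :
  0 < M -> 0 < J -> 0 < K -> 0 < theta -> 0 <= Ln <= A * Lam ->
  Lam * Lam * (M * M) = J * J * J -> theta * J <= K * M -> A ^ 2 <= B / 8 * theta ^ 2 ->
  Ln ^ 2 / K ^ 2 <= B / 8 * J.
Proof.
  intros HM HJ HK Htheta [HLn HLnA] Hscale HKM HA2.
  assert (HLn2 : Ln ^ 2 <= (A * Lam) ^ 2) by (apply pow_incr; lra).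
  assert (HthJ : (theta * J) ^ 2 <= (K * M) ^ 2) by (apply pow_incr; nra).
  assert (Ln ^ 2 * (theta * J) ^ 2 <= A ^ 2 * (J * J * J) * K ^ 2).
  { rewrite <- Hscale.
    apply (Rle_trans _ ((A * Lam) ^ 2 * (K * M) ^ 2)); [apply Rmult_le_compat; nra|nra]. }
  assert (Ln ^ 2 * theta ^ 2 <= A ^ 2 * J * K ^ 2) by (apply (Rmult_le_reg_r (J * J)); nra).
  assert (A ^ 2 * (J * K ^ 2) <= B / 8 * theta ^ 2 * (J * K ^ 2)) by (apply Rmult_le_compat_r; nra).
  apply (Rmult_le_reg_r (K ^ 2)); [nra|].
  replace (Ln ^ 2 / K ^ 2 * K ^ 2) with (Ln ^ 2) by (field; lra).
  apply (Rmult_le_reg_r (theta ^ 2)); nra.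
Qed.

Lemma points_lower_bound (A B J M Lam Pn Ln I : R) :
  0 < A -> 0 < B -> 0 < M <= J -> Lam * Lam * (M * M) = J * J * J -> (1 + 8 * A / B) * Lam <= J ->
  0 <= Pn -> 0 <= Ln <= A * Lam -> B * J <= I ->
  (forall k : nat, (1 <= k)%nat -> I <= Pn + Ln + 4 * Pn * INR k + Ln ^ 2 / INR k ^ 2) ->
  B / (64 * (1 + 8 * A ^ 2 / B)) * M <= Pn.
Proof.
  intros HA HB [HM HMJ] Hscale HLam HPn HLn HI HST.
  set (theta := 1 + 8 * A ^ 2 / B).
  assert (HAB : A ^ 2 = B / 8 * (8 * A ^ 2 / B)) by (field; lra).
  assert (HAB0 : 0 <= 8 * A ^ 2 / B) by (apply Rle_mult_inv_pos; nra).
  assert (Htheta : 1 <= theta) by (unfold theta; lra).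
  assert (HA2 : A ^ 2 <= B / 8 * theta ^ 2) by (unfold theta in *; nra).
  set (c := B / (64 * theta)).
  assert (Hc : c * theta = B / 64) by (unfold c; field; lra).
  assert (Hc0 : 0 < c) by (unfold c; apply Rdiv_lt_0_compat; lra).
  apply Rnot_lt_le; intros Hfew.
  destruct (exists_nat_between (theta * J / M)) as (k & Hk1 & Hk).
  { apply (Rmult_le_reg_r M); auto. replace (theta * J / M * M) with (theta * J) by (field; lra). nra. }
  specialize (HST k Hk1). set (K := INR k) in *.
  assert (HKlo : theta * J <= K * M).
  { replace (theta * J) with (theta * J / M * M) by (field; lra). apply Rmult_le_compat_r; lra. }
  assert (HKhi : K * M <= 2 * theta * J).
  { replace (2 * theta * J) with (2 * (theta * J / M) * M) by (field; lra).
    apply Rmult_le_compat_r; lra. }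
  assert (HK : 0 < K) by nra.
  assert (Hlines : Ln ^ 2 / K ^ 2 <= B / 8 * J)
    by (apply (lines_term_le A B J M Lam Ln K theta); auto; lra).
  assert (Hpoints : 4 * Pn * K <= B / 8 * J).
  { assert (Pn * K <= c * M * K) by (apply Rmult_le_compat_r; lra).
    assert (c * (M * K) <= c * (2 * theta * J)) by (apply Rmult_le_compat_l; lra).
    nra. }
  assert (Pn <= B / 64 * J).
  { assert (c * M <= c * J) by (apply Rmult_le_compat_l; lra).
    assert (c <= B / 64) by nra. nra. }
  assert (Ln <= B / 8 * J).
  { assert (0 <= 8 * A / B * Lam) by (apply Rmult_le_pos; [apply Rle_mult_inv_pos|]; nra).
    assert (8 * A * Lam <= B * J); [|apply (Rmult_le_reg_l 8); nra].
    replace (8 * A * Lam) with (B * (8 * A / B * Lam)) by (field; lra). apply Rmult_le_compat_l; nra. }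
  assert (0 < B * J) by nra.
  lra.
Qed.

Lemma exp_le_of_le x y : x <= y -> exp x <= exp y.
Proof. intros [H| <-]; [left; apply exp_increasing; auto|right; auto]. Qed.

Lemma ln_le_of_le x y : 0 < x -> x <= y -> ln x <= ln y.
Proof. intros Hx [H| <-]; [left; apply ln_increasing; auto|right; auto]. Qed.

Lemma Rpower_mult_exp X Y a b : Rpower X a * Rpower Y b = exp (a * ln X + b * ln Y).
Proof. unfold Rpower. rewrite exp_plus. reflexivity. Qed.

Lemma scales_identity alpha beta X Y : alpha + 2 * beta = 1 ->
  (Rpower X alpha * Rpower Y beta) * (Rpower X alpha * Rpower Y beta) *
  ((Rpower X (alpha / 2 - 1 / 2) * Rpower Y (beta / 2 + 1)) *
   (Rpower X (alpha / 2 - 1 / 2) * Rpower Y (beta / 2 + 1))) =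
  (Rpower X (alpha - 1 / 3) * Rpower Y (beta + 2 / 3)) *
  (Rpower X (alpha - 1 / 3) * Rpower Y (beta + 2 / 3)) *
  (Rpower X (alpha - 1 / 3) * Rpower Y (beta + 2 / 3)).
Proof.
  intros Hab. rewrite !Rpower_mult_exp, <- !exp_plus. f_equal.
  replace alpha with (1 - 2 * beta) by lra. field.
Qed.

Lemma points_scale_le alpha beta X Y : alpha + 2 * beta = 1 -> beta <= 2 / 3 ->
  0 < X -> 0 < Y -> Y <= X ^ 2 ->
  Rpower X (alpha / 2 - 1 / 2) * Rpower Y (beta / 2 + 1) <=
  Rpower X (alpha - 1 / 3) * Rpower Y (beta + 2 / 3).
Proof.
  intros Hab Hb HX HY HYX. rewrite !Rpower_mult_exp. apply exp_le_of_le.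
  assert (Hln : ln Y <= 2 * ln X).
  { replace (2 * ln X) with (INR 2 * ln X) by (simpl; ring). rewrite <- ln_pow; auto.
    apply ln_le_of_le; auto. }
  replace alpha with (1 - 2 * beta) by lra.
  assert (0 <= (2 / 3 - beta) * (ln X - ln Y / 2)) by (apply Rmult_le_pos; lra).
  nra.
Qed.

Lemma lines_scale_le alpha beta X Y K : 0 < X -> 0 < Y -> 0 < K -> K ^ 3 * X <= Y ^ 2 ->
  K * (Rpower X alpha * Rpower Y beta) <= Rpower X (alpha - 1 / 3) * Rpower Y (beta + 2 / 3).
Proof.
  intros HX HY HK HKXY. rewrite !Rpower_mult_exp, <- (exp_ln K) at 1 by auto.
  rewrite <- exp_plus. apply exp_le_of_le.
  assert (Hln : ln (K ^ 3 * X) <= ln (Y ^ 2))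
    by (apply ln_le_of_le; auto; apply Rmult_lt_0_compat; auto; apply pow_lt; auto).
  rewrite ln_mult, !ln_pow in Hln; auto; [|apply pow_lt; auto]. simpl INR in Hln.
  lra.
Qed.

Lemma mul_le_of_le_div x y C : 0 < C -> x <= y / C -> C * x <= y.
Proof.
  intros HC H. apply (Rmult_le_compat_l C) in H; [|lra].
  replace (C * (y / C)) with y in H by (field; lra). auto.
Qed.

Theorem proposition2p9 (alpha beta A B : R) :
  alpha + 2 * beta = 1 -> beta <= 2 / 3 -> 0 < A -> 0 < B ->
  exists C1 c : R, 0 < C1 /\ 0 < c /\
    forall (m n : nat), (0 < m)%nat -> (0 < n)%nat ->
      INR m <= INR n ^ 2 / C1 -> INR n <= INR m ^ 2 / C1 ->
      forall (P : list point) (L : list line),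
        NoDup P -> NoDup L ->
        INR (length L) <= A * Rpower (INR m) alpha * Rpower (INR n) beta ->
        INR (incidences P L) >=
          B * Rpower (INR m) (alpha - 1 / 3) * Rpower (INR n) (beta + 2 / 3) ->
        INR (length P) >=
          c * Rpower (INR m) (alpha / 2 - 1 / 2) * Rpower (INR n) (beta / 2 + 1).
Proof.
  intros Hab Hb HA HB.
  set (K := 1 + 8 * A / B).
  assert (HK : 1 <= K) by (assert (0 < 8 * A / B) by (apply Rdiv_lt_0_compat; lra); unfold K; lra).
  assert (HK3 : 1 <= K ^ 3) by (rewrite <- (pow1 3); apply pow_incr; lra).
  exists (K ^ 3), (B / (64 * (1 + 8 * A ^ 2 / B))).
  split; [lra|]. split.
  { apply Rdiv_lt_0_compat; [lra|]. assert (0 <= 8 * A ^ 2 / B) by (apply Rle_mult_inv_pos; nra). lra. }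
  intros m n Hm Hn Hmn Hnm P L NP NL HL HI.
  assert (HX : 1 <= INR m) by (apply (le_INR 1); lia).
  assert (HY : 1 <= INR n) by (apply (le_INR 1); lia).
  apply mul_le_of_le_div in Hmn, Hnm; try lra.
  assert (HYX : INR n <= INR m ^ 2).
  { apply (Rle_trans _ (K ^ 3 * INR n)); auto. rewrite <- (Rmult_1_l (INR n)) at 1.
    apply Rmult_le_compat_r; lra. }
  rewrite !Rmult_assoc in HL, HI |- *. apply Rle_ge.
  apply points_lower_bound
    with (J := Rpower (INR m) (alpha - 1 / 3) * Rpower (INR n) (beta + 2 / 3))
         (Lam := Rpower (INR m) alpha * Rpower (INR n) beta)
         (Ln := INR (length L)) (I := INR (incidences P L)); auto using pos_INR, Rge_le.
  - split; [apply Rmult_lt_0_compat; apply exp_pos|]. apply points_scale_le; auto; lra.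
  - apply scales_identity; auto.
  - fold K. apply lines_scale_le; auto; lra.
  - intros k Hk. apply szemeredi_trotter; auto.
Qed.
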